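(* Let $Z=\{z_n\}_{n\in\mathbb{N}}$, $W=\{w_m\}_{m\in\mathbb{N}}$ be almost periodic divisors in a strip $S$. Then for any $\varepsilon>0$ and any substrip $S^0\subset S$ with $\operatorname{dist}(S^0,\partial S)>\varepsilon$, there is a relatively dense set $E\subset\mathbb{R}$ such that for every $\tau\in E$ there are bijections $\sigma_Z,\sigma_W:\mathbb{N}\to\mathbb{N}$ such that for all $z_j\in|Z|\cap S^0$ and all $w_r\in|W|\cap S^0$: $$|z_j+i\tau-z_{\sigma_Z(j)}|<\varepsilon,\quad |w_r+i\tau-w_{\sigma_W(r)}|<\varepsilon,$$ $$|z_j-i\tau-z_{\sigma_Z^{-1}(j)}|<\varepsilon,\quad |w_r-i\tau-w_{\sigma_W^{-1}(r)}|<\varepsilon.$$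
   Context: A (vertical) strip is a set $\{z\in\mathbb{C}: a<\operatorname{Re} z<b\}$ with $-\infty\le a<b\le\infty$; a substrip of $S$ is a strip of this form contained in $S$. A divisor in $S$ is a sequence $\{z_j\}\subset S$ without limit points in $S$ (points may repeat finitely often, encoding multiplicity); $|Z|$ denotes its set of points. A set $E\subset\mathbb{R}$ is relatively dense if there is $L<\infty$ with $E\cap[\alpha,\alpha+L]\ne\emptyset$ for every $\alpha\in\mathbb{R}$. A divisor $Z=\{z_j\}$ in $S$ is almost periodic if for every $\varepsilon>0$ and every substrip $S^0$ with $\overline{S^0}\subset S$, the set of all $\tau\in\mathbb{R}$ for which there exists a bijection $\sigma:\mathbb{N}\to\mathbb{N}$ such that for every $j$, ($z_j\in S^0$ or $z_{\sigma(j)}\in S^0$) implies $|z_j+i\tau-z_{\sigma(j)}|<\varepsilon$, is relatively dense. *)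

From Stdlib Require Import Reals.
From Coquelicot Require Import Coquelicot.
Open Scope R_scope.

(* The strip {z : a < Re z < b}, with a, b in [-oo, +oo]. *)
Record strip := Strip { s_lo : Rbar ; s_hi : Rbar ; s_lt : Rbar_lt s_lo s_hi }.

Definition in_strip (S : strip) (z : C) : Prop :=
  Rbar_lt (s_lo S) (Finite (Re z)) /\ Rbar_lt (Finite (Re z)) (s_hi S).

Definition in_strip_closure (S : strip) (z : C) : Prop :=
  Rbar_le (s_lo S) (Finite (Re z)) /\ Rbar_le (Finite (Re z)) (s_hi S).

Definition substrip (S0 S : strip) : Prop :=
  forall z, in_strip S0 z -> in_strip S z.

Definition divisor_in (S : strip) (Z : nat -> C) : Prop :=
  (forall j, in_strip S (Z j)) /\
  (forall w, in_strip S w ->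
     exists r, 0 < r /\ exists N, forall j, (N <= j)%nat -> r <= Cmod (Z j - w)%C).

Definition rel_dense (E : R -> Prop) : Prop :=
  exists L : R, forall alpha : R, exists t, E t /\ alpha <= t <= alpha + L.

Definition bijective_nat (s : nat -> nat) : Prop :=
  exists s' : nat -> nat, (forall n, s' (s n) = n) /\ (forall n, s (s' n) = n).

Definition ishift (z : C) (tau : R) : C := (z + Ci * RtoC tau)%C.

Definition almost_periodic_divisor (S : strip) (Z : nat -> C) : Prop :=
  divisor_in S Z /\
  forall (eps : R) (S0 : strip), 0 < eps ->
    (forall z, in_strip_closure S0 z -> in_strip S z) ->
    rel_dense (fun tau => exists sigma : nat -> nat, bijective_nat sigma /\
      forall j, (in_strip S0 (Z j) \/ in_strip S0 (Z (sigma j))) ->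
        Cmod (ishift (Z j) tau - Z (sigma j))%C < eps).

(* dist(S0, boundary S) > eps, where boundary S consists of the finite
   vertical lines Re z = a, Re z = b (dist to the empty set is +oo). *)
Definition dist_boundary_gt (S0 S : strip) (eps : R) : Prop :=
  (s_lo S = m_infty \/ Rbar_lt (Rbar_plus (s_lo S) (Finite eps)) (s_lo S0)) /\
  (s_hi S = p_infty \/ Rbar_lt (s_hi S0) (Rbar_plus (s_hi S) (Finite (- eps)))).

From Stdlib Require Import Reals Lra Lia Classical.
From Coquelicot Require Import Coquelicot.
Open Scope R_scope.

(* Take almost periods a, b of Z and W of precision eps/4 on a slightly wider
   strip, in a window [alpha + M, alpha + M + L].  The value of a - b falls
   into one of finitely many bins of width eps/4; fixing once and for all a
   bounded representative pair (a', b') for every bin, tau := a - a' lies in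
   [alpha, alpha + 2M + L].  Composing the translations for a and -a' makes
   tau an almost period of Z, and since tau differs from b - b' by less than
   eps/4 it is also one of W.  Inverting the bijections gives -tau. *)

Lemma Rabs_Re_sub_le_Cmod_ishift (z w : C) (t : R) :
  Rabs (Re w - Re z) <= Cmod (ishift z t - w)%C.
Proof.
  eapply Rle_trans; [|apply re_le_Cmod].
  right; rewrite <- Rabs_Ropp; f_equal; destruct z, w; simpl; ring.
Qed.

Lemma Cmod_ishift_add_le (z w1 w2 : C) (t1 t2 : R) :
  Cmod (ishift z (t1 + t2) - w2)%C
  <= Cmod (ishift z t1 - w1)%C + Cmod (ishift w1 t2 - w2)%C.
Proof.
  replace (ishift z (t1 + t2) - w2)%C
    with ((ishift z t1 - w1) + (ishift w1 t2 - w2))%C.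
  - apply Cmod_triangle.
  - unfold ishift; rewrite RtoC_plus; ring.
Qed.

Lemma Cmod_ishift_opp (z w : C) (t : R) :
  Cmod (ishift w (- t) - z)%C = Cmod (ishift z t - w)%C.
Proof.
  rewrite <- Cmod_opp; f_equal; unfold ishift; rewrite RtoC_opp; ring.
Qed.

Lemma Cmod_ishift_le_shift (z w : C) (t t' : R) :
  Cmod (ishift z t' - w)%C <= Cmod (ishift z t - w)%C + Rabs (t' - t).
Proof.
  replace (ishift z t' - w)%C with ((ishift z t - w) + Ci * RtoC (t' - t))%C.
  - eapply Rle_trans; [apply Cmod_triangle|].
    rewrite Cmod_mult, Cmod_R.
    replace (Cmod Ci) with 1; [lra|].
    unfold Cmod, Ci; simpl.
    replace (0 * (0 * 1) + 1 * (1 * 1)) with 1 by ring.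
    now rewrite sqrt_1.
  - unfold ishift; rewrite RtoC_minus; ring.
Qed.

Definition approx_translation (Z : nat -> C) (S : strip) (t d : R)
  (s s' : nat -> nat) : Prop :=
  (forall n, s' (s n) = n) /\ (forall n, s (s' n) = n) /\
  forall j, (in_strip S (Z j) \/ in_strip S (Z (s j))) ->
    Cmod (ishift (Z j) t - Z (s j))%C < d.

Definition approx_period (Z : nat -> C) (S : strip) (d t : R) : Prop :=
  exists s s', approx_translation Z S t d s s'.

Section ApproxTranslation.

Variables (Z : nat -> C) (S : strip).

Lemma approx_translation_inv t d s s' :
  approx_translation Z S t d s s' -> approx_translation Z S (- t) d s' s.
Proof.
  intros [ss' [s's close]]; split; [exact s's|split; [exact ss'|]].
  intros j Hj; rewrite Cmod_ishift_opp; rewrite <- (s's j) at 2.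
  apply close; rewrite s's; tauto.
Qed.

Lemma approx_translation_near t t' d e s s' :
  approx_translation Z S t d s s' -> d + Rabs (t' - t) <= e ->
  approx_translation Z S t' e s s'.
Proof.
  intros [ss' [s's close]] hde; split; [exact ss'|split; [exact s's|]].
  intros j Hj; eapply Rle_lt_trans; [apply (Cmod_ishift_le_shift _ _ t)|].
  specialize (close j Hj); lra.
Qed.

(* The neighbourhood hypothesis guarantees that the intermediate point
   Z (s1 j) of the chain lies in S, where the other translation is controlled. *)
Lemma approx_translation_comp (S0 : strip) d t1 t2 s1 s1' s2 s2' :
  0 < d ->
  (forall z w, in_strip S0 z -> Rabs (Re w - Re z) < d -> in_strip S w) ->
  approx_translation Z S t1 d s1 s1' -> approx_translation Z S t2 d s2 s2' ->
  approx_translation Z S0 (t1 + t2) (2 * d)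
    (fun n => s2 (s1 n)) (fun n => s1' (s2' n)).
Proof.
  intros hd nbhd [a1 [a2 close1]] [b1 [b2 close2]].
  split; [intros; now rewrite b1, a1|split; [intros; now rewrite a2, b2|]].
  assert (in_S0 : forall z, in_strip S0 z -> in_strip S z).
  { intros z hz; apply (nbhd z z hz); rewrite Rminus_diag, Rabs_R0; lra. }
  intros j Hj.
  assert (steps : Cmod (ishift (Z j) t1 - Z (s1 j))%C < d /\
                  Cmod (ishift (Z (s1 j)) t2 - Z (s2 (s1 j)))%C < d).
  { destruct Hj as [Hj|Hj].
      assert (first := close1 j (or_introl (in_S0 _ Hj))).
      split; [exact first|apply close2; left].
      exact (nbhd _ _ Hj (Rle_lt_trans _ _ _ (Rabs_Re_sub_le_Cmod_ishift _ _ t1) first)).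
    - assert (second := close2 (s1 j) (or_intror (in_S0 _ Hj))).
      split; [apply close1; right|exact second].
      apply (nbhd _ _ Hj); rewrite <- Rabs_Ropp, Ropp_minus_distr.
      exact (Rle_lt_trans _ _ _ (Rabs_Re_sub_le_Cmod_ishift _ _ t2) second). }
  eapply Rle_lt_trans; [apply (Cmod_ishift_add_le _ (Z (s1 j)))|]; lra.
Qed.

End ApproxTranslation.

Lemma exists_thickened_strip (S0 S : strip) (eps : R) :
  0 < eps -> dist_boundary_gt S0 S eps ->
  exists S1, (forall z, in_strip_closure S1 z -> in_strip S z) /\
    (forall z w, in_strip S0 z -> Rabs (Re w - Re z) < eps / 2 -> in_strip S1 w).
Proof.
  intros he [hlo hhi].
  destruct S0 as [l0 h0 lt0], S as [l h lt]; simpl in *.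
  set (l1 := match l0 with Finite x => Finite (x - eps / 2) | e => e end).
  set (h1 := match h0 with Finite x => Finite (x + eps / 2) | e => e end).
  assert (lt1 : Rbar_lt l1 h1) by (unfold l1, h1; destruct l0, h0; simpl in *; auto; lra).
  exists (Strip l1 h1 lt1); unfold in_strip, in_strip_closure, l1, h1; simpl; split.
  - intros z [zlo zhi]; split.
    + destruct hlo as [->|hlo]; [exact I|].
      destruct l, l0; simpl in *; try contradiction; lra.
    + destruct hhi as [->|hhi]; [exact I|].
      destruct h, h0; simpl in *; try contradiction; lra.
  - intros z w [zlo zhi] hw; apply Rabs_def2 in hw.
    split; destruct l0; try destruct h0; simpl in *; try contradiction; auto; lra.
Qed.

Lemma almost_periodic_rel_dense (S S0 : strip) (Z : nat -> C) (d : R) :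
  almost_periodic_divisor S Z -> 0 < d ->
  (forall z, in_strip_closure S0 z -> in_strip S z) ->
  rel_dense (approx_period Z S0 d).
Proof.
  intros [_ ap] hd hS0; destruct (ap d S0 hd hS0) as [L dense].
  exists L; intros alpha.
  destruct (dense alpha) as [t [[s [[s' [ss' s's]] close]] ht]].
  exists t; split; [exists s, s'; repeat split; assumption|exact ht].
Qed.

Lemma rel_dense_mono (E F : R -> Prop) :
  (forall t, E t -> F t) -> rel_dense E -> rel_dense F.
Proof.
  intros EF [L dense]; exists L; intros alpha.
  destruct (dense alpha) as [t [Et ht]]; exists t; auto.
Qed.

Lemma rel_dense_length_ge0 (E : R -> Prop) (L : R) :
  (forall alpha, exists t, E t /\ alpha <= t <= alpha + L) -> 0 <= L.
Proof. intros dense; destruct (dense 0) as [t [_ ht]]; lra. Qed.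

Lemma exists_bounded_witnesses {X : Type} (P : nat -> X -> Prop) (size : X -> R) :
  forall N, exists M, forall m, (m <= N)%nat -> (exists x, P m x) ->
    exists x, P m x /\ size x <= M.
Proof.
  induction N as [|N [M IH]].
  - destruct (classic (exists x, P 0%nat x)) as [[x Px]|none].
    + exists (size x); intros m hm _; replace m with 0%nat by lia.
      exists x; split; [exact Px|lra].
    + exists 0; intros m hm Pm; replace m with 0%nat in Pm by lia; tauto.
  - destruct (classic (exists x, P (S N) x)) as [[x Px]|none].
    + exists (Rmax M (size x)); intros m hm Pm.
      destruct (Nat.eq_dec m (S N)) as [->|ne].
      * exists x; split; [exact Px|apply Rmax_r].
      * destruct (IH m ltac:(lia) Pm) as [y [Py hy]].
        exists y; split; [exact Py|eapply Rle_trans; [exact hy|apply Rmax_l]].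
    + exists M; intros m hm Pm.
      destruct (Nat.eq_dec m (S N)) as [->|ne]; [tauto|apply IH; [lia|exact Pm]].
Qed.

Lemma exists_nat_bin (d x : R) : 0 < d -> 0 <= x ->
  exists m, INR m * d <= x < INR m * d + d.
Proof.
  intros hd hx.
  destruct (nfloor_ex (x / d)) as [m [hm1 hm2]]; [apply Rdiv_le_0_compat; lra|].
  exists m; replace x with (x / d * d) by (field; lra); split; nra.
Qed.

Lemma nat_bin_le (d x y : R) (m N : nat) : 0 < d ->
  INR m * d <= x -> x <= y -> y < INR N * d + d -> (m <= N)%nat.
Proof.
  intros hd hm hxy hN.
  assert (INR m < INR (S N)).
  { rewrite S_INR; apply (Rmult_lt_reg_r d); lra. }
  apply INR_lt in H; lia.
Qed.

Lemma rel_dense_close_differences (A B : R -> Prop) (d : R) :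
  0 < d -> rel_dense A -> rel_dense B ->
  rel_dense (fun t => exists a a' b b', A a /\ A a' /\ B b /\ B b' /\
    t = a - a' /\ Rabs ((a - a') - (b - b')) < d).
Proof.
  intros hd [La denseA] [Lb denseB].
  assert (hLa := rel_dense_length_ge0 _ _ denseA).
  assert (hLb := rel_dense_length_ge0 _ _ denseB).
  set (in_bin := fun m (p : R * R) =>
    A (fst p) /\ B (snd p) /\ INR m * d <= fst p - snd p + Lb < INR m * d + d).
  destruct (exists_nat_bin d (La + Lb) hd ltac:(lra)) as [N hN].
  destruct (exists_bounded_witnesses in_bin
              (fun p => Rmax (Rabs (fst p)) (Rabs (snd p))) N) as [M reps].
  exists (2 * M + La); intros alpha.
  destruct (denseA (alpha + M)) as [a [Aa ha]].
  destruct (denseB (alpha + M)) as [b [Bb hb]].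
  destruct (exists_nat_bin d (a - b + Lb) hd ltac:(lra)) as [m hm].
  assert (hmN : (m <= N)%nat) by (apply (nat_bin_le d (a - b + Lb) (La + Lb)); lra).
  destruct (reps m hmN (ex_intro _ (a, b) (conj Aa (conj Bb hm))))
    as [[a' b'] [[Aa' [Bb' hm']] hsize]]; simpl in *.
  assert (ha' : Rabs a' <= M) by (eapply Rle_trans; [apply Rmax_l|exact hsize]).
  assert (hb' : Rabs b' <= M) by (eapply Rle_trans; [apply Rmax_r|exact hsize]).
  apply Rabs_le_between in ha'; apply Rabs_le_between in hb'.
  exists (a - a'); split; [|lra].
  exists a, a', b, b'; repeat split; try assumption.
  apply Rabs_def1; lra.
Qed.

Lemma approx_translation_both_ways (Z : nat -> C) (S : strip) t e s s' :
  approx_translation Z S t e s s' ->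
  forall j, in_strip S (Z j) ->
    Cmod (ishift (Z j) t - Z (s j))%C < e /\
    Cmod (ishift (Z j) (- t) - Z (s' j))%C < e.
Proof.
  intros g j Hj; split.
  - apply g; now left.
  - apply (approx_translation_inv _ _ _ _ _ _ g); now left.
Qed.

Lemma approx_period_of_differences (Z : nat -> C) (S0 S1 : strip) d e a a' t :
  0 < d -> 2 * d + Rabs (t - (a - a')) <= e ->
  (forall z w, in_strip S0 z -> Rabs (Re w - Re z) < d -> in_strip S1 w) ->
  approx_period Z S1 d a -> approx_period Z S1 d a' -> approx_period Z S0 e t.
Proof.
  intros hd he nbhd [s1 [s1' g1]] [s2 [s2' g2]].
  exists (fun n => s2' (s1 n)), (fun n => s1' (s2 n)).
  apply (approx_translation_near _ _ (a + - a') _ (2 * d)); [|exact he].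
  exact (approx_translation_comp _ _ _ _ _ _ _ _ _ _ hd nbhd g1
           (approx_translation_inv _ _ _ _ _ _ g2)).
Qed.

Theorem lemma2 (S : strip) (Z W : nat -> C) :
  almost_periodic_divisor S Z -> almost_periodic_divisor S W ->
  forall (eps : R) (S0 : strip), 0 < eps -> substrip S0 S ->
  dist_boundary_gt S0 S eps ->
  exists E : R -> Prop, rel_dense E /\
    forall tau, E tau ->
      exists sZ sZinv sW sWinv : nat -> nat,
        (forall n, sZinv (sZ n) = n) /\ (forall n, sZ (sZinv n) = n) /\
        (forall n, sWinv (sW n) = n) /\ (forall n, sW (sWinv n) = n) /\
        (forall j, in_strip S0 (Z j) ->
           Cmod (ishift (Z j) tau - Z (sZ j))%C < eps /\
           Cmod (ishift (Z j) (- tau) - Z (sZinv j))%C < eps) /\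
        (forall r, in_strip S0 (W r) ->
           Cmod (ishift (W r) tau - W (sW r))%C < eps /\
           Cmod (ishift (W r) (- tau) - W (sWinv r))%C < eps).
Proof.
  intros apZ apW eps S0 he _ hdist.
  destruct (exists_thickened_strip S0 S eps he hdist) as [S1 [hS1 nbhd]].
  set (d := eps / 4); assert (hd : 0 < d) by (unfold d; lra).
  assert (nbhd_d : forall z w, in_strip S0 z -> Rabs (Re w - Re z) < d -> in_strip S1 w)
    by (intros z w hz hw; apply (nbhd z w hz); unfold d in hw; lra).
  exists (fun tau => approx_period Z S0 eps tau /\ approx_period W S0 eps tau); split.
  - refine (rel_dense_mono _ _ _ (rel_dense_close_differences _ _ d hd
      (almost_periodic_rel_dense S S1 Z d apZ hd hS1)
      (almost_periodic_rel_dense S S1 W d apW hd hS1))).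
    intros t [a [a' [b [b' [Za [Za' [Wb [Wb' [-> hclose]]]]]]]]]; split.
    + apply (approx_period_of_differences Z S0 S1 d _ a a'); try assumption.
      rewrite Rminus_diag, Rabs_R0; unfold d; lra.
    + apply (approx_period_of_differences W S0 S1 d _ b b'); try assumption.
      unfold d in *; lra.
  - intros tau [[s [s' gZ]] [r [r' gW]]].
    exists s, s', r, r'.
    split; [apply gZ|split; [apply gZ|split; [apply gW|split; [apply gW|]]]].
    split; apply approx_translation_both_ways; assumption.
Qed.
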